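(* Let $1\le l\le s+1$ and let $\beta_1<\beta_2<\dots<\beta_l$ be indices in $\{0,\dots,s\}$. Define $$\mathcal{C}_{\beta_1\cdots\beta_l}=\{c_1+c_2+\dots+c_l:\ c_i\in\mathcal{I}_{\beta_i}\setminus\{0\},\ i=1,\dots,l\}\subseteq\mathcal{R},$$ on which $\langle\rho\rangle$ acts. Then $$N_{\langle\rho\rangle}(\mathcal{C}_{\beta_1\cdots\beta_l})=\frac{\prod_{i=1}^{l}(q^{d_{\beta_i}}-1)\cdot\gcd(1+t\alpha_{\beta_1},\dots,1+t\alpha_{\beta_l},n)}{tn}.$$
   Context: Standing setup: $q$ is a prime power, $n$ a positive integer with $\gcd(n,q)=1$, $\lambda\in\mathbb{F}_q^{*}$ has multiplicative order $t$ (so $t\mid q-1$). $\mathcal{R}=\mathbb{F}_q[x]/\langle x^n-\lambda\rangle$; vectors $(c_0,\dots,c_{n-1})\in\mathbb{F}_q^n$ are identified with $c_0+c_1x+\dots+c_{n-1}x^{n-1}\in\mathcal{R}$, and a $\lambda$-constacyclic code of length $n$ is an ideal of $\mathcal{R}$. Let $\zeta$ be a primitive $tn$-th root of unity in an extension $\mathbb{F}_{q^m}$ with $\zeta^n=\lambda$, so $x^n-\lambda=\prod_{i=0}^{n-1}(x-\zeta^{1+ti})$. The set $\mathcal{S}=\{1+ti:0\le i\le n-1\}$ (residues mod $tn$) is partitioned into the distinct $q$-cyclotomic cosets modulo $tn$, $C_{1+t\alpha_j}=\{(1+t\alpha_j)q^{h}\bmod tn: h\ge 0\}$, $j=0,\dots,s$,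 with $0=\alpha_0<\alpha_1<\dots<\alpha_s\le n-1$ and $d_j=|C_{1+t\alpha_j}|$. Let $m_j(x)=\prod_{h\in C_{1+t\alpha_j}}(x-\zeta^{h})$ (irreducible over $\mathbb{F}_q$), and let $\mathcal{I}_j$ be the ideal of $\mathcal{R}$ generated by $(x^n-\lambda)/m_j(x)$; this is an irreducible $\lambda$-constacyclic code of dimension $d_j$, said to correspond to the coset $C_{1+t\alpha_j}$, and $\mathcal{R}=\mathcal{I}_0\oplus\dots\oplus\mathcal{I}_s$. The cyclic shift $\rho:\mathcal{R}\to\mathcal{R}$ is $\rho(c(x))=xc(x)$, i.e. $(c_0,\dots,c_{n-1})\mapsto(\lambda c_{n-1},c_0,\dots,c_{n-2})$; $\langle\rho\rangle$ is the cyclic group it generates, of order $tn$. For a group $G$ acting on a finite set $X$, $N_G(X)$ denotes the number of $G$-orbits on $X$. *)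

From HB Require Import structures.
From mathcomp Require Import all_boot all_order all_algebra all_field.
Set Implicit Arguments.
Unset Strict Implicit.
Unset Printing Implicit Defensive.
Import GRing.Theory.
Local Open Scope ring_scope.

(* The ring R = F[x]/<x^n - lam>; elements of R are identified with row
   vectors (c_0,...,c_{n-1}) in F^n, i.e. with c_0 + c_1 x + ... + c_{n-1} x^{n-1}. *)

Definition polyR (F : finFieldType) (n : nat) (lam : F) : {poly F} :=
  'X^n - lam%:P.

Definition poly_of (F : finFieldType) (n : nat) (c : 'rV[F]_n) : {poly F} :=
  \sum_(i < n) c 0 i *: 'X^i.

Definition vec_of (F : finFieldType) (n : nat) (lam : F) (p : {poly F}) : 'rV[F]_n :=
  \row_(i < n) (p %% polyR n lam)`_i.

Definition rho (F : finFieldType) (n : nat) (lam : F) (c : 'rV[F]_n) : 'rV[F]_n :=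
  vec_of n lam ('X * poly_of c).

Definition gen_ideal (F : finFieldType) (n : nat) (lam : F) (g : {poly F})
  : {set 'rV[F]_n} :=
  [set vec_of n lam (g * poly_of a) | a : 'rV[F]_n].

(* the q-cyclotomic coset of r modulo m: { r q^h mod m : h >= 0 }, listed
   without repetition; h ranging over 0 <= h < m covers a full period. *)
Definition cycl_coset (q m r : nat) : seq nat :=
  undup [seq (r * q ^ h %% m)%N | h <- iota 0 m].

Definition coset_poly (F : finFieldType) (L : fieldExtType F) (z : L) (C : seq nat)
  : {poly L} :=
  \prod_(h <- C) ('X - (z ^+ h)%:P).

Definition descend (F : finFieldType) (L : fieldExtType F) (P : {poly L}) : {poly F} :=
  \poly_(i < size P) odflt 0 [pick a : F | a%:A == P`_i].

Definition m_poly (F : finFieldType) (L : fieldExtType F) (n t : nat) (z : L)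
  (alpha : nat -> nat) (j : nat) : {poly F} :=
  descend (coset_poly z (cycl_coset #|F| (t * n) (1 + t * alpha j))).

Definition I_code (F : finFieldType) (L : fieldExtType F) (n t : nat) (lam : F)
  (z : L) (alpha : nat -> nat) (j : nat) : {set 'rV[F]_n} :=
  gen_ideal n lam (polyR n lam %/ m_poly n t z alpha j).

Definition d_dim (q n t : nat) (alpha : nat -> nat) (j : nat) : nat :=
  size (cycl_coset q (t * n) (1 + t * alpha j)).

Definition norbits (T : finType) (f : T -> T) (X : {set T}) : nat :=
  #|[set [set y | fconnect f x y] | x in X]|.

Definition C_beta (F : finFieldType) (L : fieldExtType F) (n t : nat) (lam : F)
  (z : L) (alpha : nat -> nat) (l : nat) (beta : nat -> nat) : {set 'rV[F]_n} :=
  [set \sum_(i < l) f i | f : {ffun 'I_l -> 'rV[F]_n}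
     & [forall i : 'I_l, f i \in I_code n t lam z alpha (beta i) :\ 0]].

From HB Require Import structures.
From mathcomp Require Import all_boot all_order all_algebra all_field.
From mathcomp Require Import cyclic zify.
Import GRing.Theory.
Set Implicit Arguments.
Unset Strict Implicit.
Unset Printing Implicit Defensive.

(* Write r_i = 1 + t alpha_{beta_i}.  A word c of R = F[x]/<x^n - lam> is
   determined by its values c(z^(1 + t i)), i < n, at the roots of x^n - lam,
   and rho multiplies the value at a root w by w.  A codeword of the
   irreducible code I_j vanishes at every root z^h with h outside the
   q-cyclotomic coset of 1 + t alpha_j, because m_j (a polynomial over F, its
   root set being Frobenius stable) does not vanish there.  Since the cosets
   of the r_i are pairwise disjoint, a sum c = c_1 + ... + c_l of nonzero
   c_i in I_{beta_i} satisfies rho^k c = c iff t n divides every r_i k, i.e.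
   iff t n / gcd(t n, G) divides k, with G = gcd_i r_i.  So every orbit on C
   has that length; the decomposition of c is unique, so
   #|C| = prod_i (q^(d_i) - 1); and gcd(t n, G) = gcd(G, n) as G = 1 mod t. *)

Lemma totient_leq m : totient m <= m.
Proof.
rewrite totient_count_coprime.
apply: leq_trans (_ : \sum_(0 <= d < m) 1 <= m).
  by apply: leq_sum => i _; apply: leq_b1.
by rewrite sum_nat_const_nat muln1 subn0.
Qed.

Lemma modn_1_mul t a : (1 + t * a) %% t = 1 %% t.
Proof. by rewrite addnC mulnC modnMDl. Qed.

Lemma increasing_ltn (f : nat -> nat) l :
  (forall i, i.+1 < l -> f i < f i.+1) -> forall i j, i < j -> j < l -> f i < f j.
Proof.
move=> f_incr i; elim=> // j IHj; rewrite ltnS leq_eqVlt => /orP[/eqP <-|ij] jl.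
  exact: f_incr.
exact: ltn_trans (IHj ij (ltnW jl)) (f_incr _ jl).
Qed.

Section CyclotomicCoset.

Variables q m : nat.
Hypotheses (m_gt0 : 0 < m) (coprime_qm : coprime q m).

Lemma mem_cycl_coset r h :
  (h \in cycl_coset q m r) = [exists e : 'I_m, h == r * q ^ e %% m].
Proof.
rewrite /cycl_coset mem_undup; apply/mapP/existsP => [[e]|[e /eqP ->]].
  by rewrite mem_iota add0n => /andP[_ he] ->; exists (Ordinal he).
by exists (val e); rewrite // mem_iota add0n ltn_ord.
Qed.

Lemma expn_mul_totient k : q ^ (k * totient m) = 1 %[mod m].
Proof.
by rewrite mulnC expnM -modnXm (Euler_exp_totient coprime_qm) modnXm exp1n.
Qed.

(* Every residue r q^e mod m lies in the coset of r, whatever the size of e: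
   the exponent can be reduced modulo totient m <= m by Euler's theorem. *)
Lemma cycl_coset_mulX r e : r * q ^ e %% m \in cycl_coset q m r.
Proof.
have T_gt0 : 0 < totient m by rewrite totient_gt0.
have qe : q ^ e = q ^ (e %% totient m) %[mod m].
  by rewrite {1}(divn_eq e (totient m)) expnD -modnMml expn_mul_totient modnMml mul1n.
have e_lt : e %% totient m < m by rewrite (leq_trans (ltn_pmod _ T_gt0)) ?totient_leq.
by rewrite mem_cycl_coset; apply/existsP; exists (Ordinal e_lt); rewrite -modnMmr qe modnMmr.
Qed.

Lemma cycl_coset_lt r h : h \in cycl_coset q m r -> h < m.
Proof. by rewrite mem_cycl_coset => /existsP[e /eqP ->]; rewrite ltn_pmod. Qed.

Lemma cycl_coset_mulq r h : h \in cycl_coset q m r -> h * q %% m \in cycl_coset q m r.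
Proof.
rewrite mem_cycl_coset => /existsP[e /eqP ->].
by rewrite modnMml -mulnA -expnSr cycl_coset_mulX.
Qed.

(* Divisibility by m of multiples is constant along a coset, since q is a unit. *)
Lemma cycl_coset_dvd r h k : h \in cycl_coset q m r -> (m %| h * k) = (m %| r * k).
Proof.
rewrite mem_cycl_coset => /existsP[e /eqP ->].
rewrite /dvdn modnMml -[_ == 0]/(m %| _) mulnAC Gauss_dvdl //.
by rewrite coprimeXr // coprime_sym.
Qed.

Lemma cycl_coset_mod t r h : t %| m -> q %% t = 1 %% t -> r %% t = 1 %% t ->
  h \in cycl_coset q m r -> h %% t = 1 %% t.
Proof.
move=> tm qt rt; rewrite mem_cycl_coset => /existsP[e /eqP ->].
by rewrite (modn_dvdm _ tm) -modnMml rt modnMml mul1n -modnXm qt modnXm exp1n.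
Qed.

Lemma cycl_coset_sub r1 r2 h : h \in cycl_coset q m r1 -> h \in cycl_coset q m r2 ->
  {subset cycl_coset q m r1 <= cycl_coset q m r2}.
Proof.
rewrite !mem_cycl_coset => /existsP[a /eqP ->] /existsP[b /eqP hb] x.
rewrite mem_cycl_coset => /existsP[e /eqP ->].
set T := totient m; have aT : a <= a * T by rewrite leq_pmulr ?totient_gt0.
have -> : r1 * q ^ e %% m = r1 * q ^ a * q ^ (e + a * T - a) %% m.
  rewrite -mulnA -expnD addnBA ?addKn; last by rewrite (leq_trans aT) ?leq_addl.
  by rewrite expnD mulnA -[in RHS]modnMmr expn_mul_totient modnMmr muln1.
by rewrite -modnMml hb modnMml -mulnA -expnD cycl_coset_mulX.
Qed.

Lemma cycl_coset_eq r1 r2 h : h \in cycl_coset q m r1 -> h \in cycl_coset q m r2 ->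
  cycl_coset q m r1 =i cycl_coset q m r2.
Proof.
by move=> h1 h2 x; apply/idP/idP; [exact: cycl_coset_sub h1 h2 x|exact: cycl_coset_sub h2 h1 x].
Qed.

End CyclotomicCoset.

Lemma dvdn_mul_gcd m G k : 0 < m -> (m %| G * k) = (m %/ gcdn m G %| k).
Proof.
move=> m_gt0; set g := gcdn m G.
have g_gt0 : 0 < g by rewrite gcdn_gt0 m_gt0.
have em : m = m %/ g * g by rewrite divnK // dvdn_gcdl.
have eG : G = G %/ g * g by rewrite divnK // dvdn_gcdr.
have cop : coprime (m %/ g) (G %/ g).
  by rewrite /coprime -(eqn_pmul2r g_gt0) muln_gcdl -em -eG mul1n.
by rewrite {1}em {1}eG mulnAC dvdn_pmul2r // mulnC Gauss_dvdl.
Qed.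

Lemma forall_dvdn_biggcd (I : finType) (F : I -> nat) m k :
  [forall i, m %| F i * k] = (m %| (\big[gcdn/0]_i F i) * k).
Proof.
have -> : (\big[gcdn/0]_i F i) * k = \big[gcdn/0]_i (F i * k).
  by elim/big_rec2: _ => [|i y1 y2 _ <-]; rewrite ?mul0n // muln_gcdl.
by apply/forallP/dvdn_biggcdP => h i //; exact: h.
Qed.

Section Orbits.

Variables (T : finType) (f : T -> T).
Hypothesis f_inj : injective f.

(* On an f-closed set, the orbits are indexed by their roots, so [norbits]
   agrees with the library's orbit count [fcard]. *)
Lemma norbits_fcard (X : {set T}) : fclosed f X -> norbits f X = fcard f X.
Proof.
move=> clX; have fsym := fconnect_sym f_inj; rewrite /norbits.
pose orb x := [set y | fconnect f x y].
have orb_root x : orb (froot f x) = orb x.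
  by apply/setP => y; rewrite !inE -(same_connect fsym (connect_root _ x)).
have -> : [set orb x | x in X] = orb @: [predI froots f & X].
  apply/setP => A; apply/imsetP/imsetP => [[x xX ->]|[x /andP[_ xX] ->]]; last by exists x.
  exists (froot f x); last by rewrite orb_root.
  rewrite inE /=; apply/andP; split; first exact: (roots_root fsym).
  by rewrite -(closed_connect clX (connect_root _ x)).
rewrite card_in_imset; first exact: eq_card.
move=> x y /andP[/eqP rx _] /andP[/eqP ry _] orb_xy.
have : y \in orb x by rewrite orb_xy inE connect0.
by rewrite inE => /(fingraph.rootP fsym); rewrite rx ry.
Qed.

Lemma norbits_mul (X : {set T}) k :
  (forall x, x \in X -> f x \in X) -> (forall x, x \in X -> order f x = k) ->
  norbits f X * k = #|X|.
Proof.
move=> fX oX; have clX : fclosed f X.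
  by apply: (intro_closed (fconnect_sym f_inj)) => x y /eqP <-; apply: fX.
rewrite norbits_fcard // fcard_order_set //.
by apply/subsetP => x /oX; rewrite inE => ->.
Qed.

Lemma order_eq x k0 : 0 < k0 -> (forall k, (iter k f x == x) = (k0 %| k)) -> order f x = k0.
Proof.
move=> k0_gt0 fix_x; apply/eqP; rewrite eqn_leq; apply/andP; split; last first.
  by apply: dvdn_leq; [exact: order_gt0 | rewrite -fix_x iter_order].
rewrite leqNgt; apply/negP => lt_k0.
have := findex_iter lt_k0; have /eqP -> : iter k0 f x == x by rewrite fix_x.
by rewrite findex0 => k0_0; move: k0_gt0; rewrite -k0_0.
Qed.

End Orbits.

Local Open Scope ring_scope.

Lemma poly_of_is_zmod_morphism (F : finFieldType) (n : nat) : zmod_morphism (@poly_of F n).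
Proof.
by move=> c d; rewrite /poly_of -sumrB; apply: eq_bigr => i _; rewrite !mxE scalerBl.
Qed.
HB.instance Definition _ (F : finFieldType) (n : nat) :=
  GRing.isZmodMorphism.Build _ _ (@poly_of F n) (@poly_of_is_zmod_morphism F n).

Lemma vec_of_is_zmod_morphism (F : finFieldType) (n : nat) (lam : F) :
  zmod_morphism (vec_of n lam).
Proof. by move=> p r; apply/matrixP => i j; rewrite !mxE modpD modpN coefD coefN. Qed.
HB.instance Definition _ (F : finFieldType) (n : nat) (lam : F) :=
  GRing.isZmodMorphism.Build _ _ (vec_of n lam) (@vec_of_is_zmod_morphism F n lam).

Lemma rho_is_zmod_morphism (F : finFieldType) (n : nat) (lam : F) :
  zmod_morphism (@rho F n lam).
Proof. by move=> c d; rewrite /rho raddfB mulrBr raddfB. Qed.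
HB.instance Definition _ (F : finFieldType) (n : nat) (lam : F) :=
  GRing.isZmodMorphism.Build _ _ (@rho F n lam) (@rho_is_zmod_morphism F n lam).

Section PolyOf.

Variable F : finFieldType.

Lemma coef_poly_of n (c : 'rV[F]_n) (i : 'I_n) : (poly_of c)`_i = c 0 i.
Proof.
rewrite /poly_of coef_sum (bigD1 i) //= big1 => [|j ji]; last first.
  rewrite coefZ coefXn; case: eqP => [/val_inj ij|_]; last by rewrite mulr0.
  by rewrite ij eqxx in ji.
by rewrite coefZ coefXn eqxx mulr1 addr0.
Qed.

Lemma size_poly_of n (c : 'rV[F]_n) : (size (poly_of c) <= n)%N.
Proof.
apply/leq_sizeP => i ni; rewrite /poly_of coef_sum big1 // => j _.
by rewrite coefZ coefXn gtn_eqF ?mulr0 // (leq_trans (ltn_ord j)).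
Qed.

Lemma poly_of_inj n : injective (@poly_of F n).
Proof.
move=> c d e; apply/matrixP => i j; rewrite [i]ord1.
by have := congr1 (fun p : {poly F} => p`_j) e; rewrite /= !coef_poly_of.
Qed.

Lemma poly_of_row d (p : {poly F}) : (size p <= d)%N -> poly_of (\row_(i < d) p`_i) = p.
Proof.
move=> sp; apply/polyP => i; case: (ltnP i d) => [id|di].
  by have := coef_poly_of (\row_(i < d) p`_i) (Ordinal id); rewrite /= mxE => ->.
by rewrite !nth_default // (leq_trans _ di) ?size_poly_of.
Qed.

End PolyOf.

Section Words.

Variables (F : finFieldType) (n : nat) (lam : F).
Hypothesis n_gt0 : (0 < n)%N.

Local Notation P := (polyR n lam).

Lemma size_polyR : size P = n.+1.
Proof. exact: size_XnsubC. Qed.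

Lemma polyR_neq0 : P != 0.
Proof. by rewrite -size_poly_eq0 size_polyR. Qed.

Lemma poly_of_vec (p : {poly F}) : poly_of (vec_of n lam p) = p %% P.
Proof.
apply/polyP => i; case: (ltnP i n) => [ni|ni].
  by have := coef_poly_of (vec_of n lam p) (Ordinal ni); rewrite /= mxE => ->.
have := ltn_modp p P; rewrite polyR_neq0 size_polyR ltnS => sp.
by rewrite !nth_default // (leq_trans _ ni) ?size_poly_of.
Qed.

Lemma vec_of_poly (c : 'rV[F]_n) : vec_of n lam (poly_of c) = c.
Proof.
by apply: poly_of_inj; rewrite poly_of_vec modp_small // size_polyR ltnS size_poly_of.
Qed.

Lemma vec_of_eq (p r : {poly F}) : p %% P = r %% P -> vec_of n lam p = vec_of n lam r.
Proof. by move=> e; apply/matrixP => i j; rewrite !mxE e. Qed.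

Lemma iter_rho (c : 'rV[F]_n) k : iter k (rho lam) c = vec_of n lam ('X^k * poly_of c).
Proof.
elim: k => [|k IH]; first by rewrite mul1r vec_of_poly.
by rewrite iterS IH /rho poly_of_vec; apply: vec_of_eq; rewrite modp_mul exprS mulrA.
Qed.

End Words.

Section PrimitiveRootPowers.

Variables (R : idomainType) (m : nat) (z : R).
Hypothesis z_prim : m.-primitive_root z.

Lemma expr_prim_mod h : z ^+ (h %% m) = z ^+ h.
Proof. by rewrite expr_mod // prim_expr_order. Qed.

Lemma prim_root_neq0 : z != 0.
Proof.
apply/eqP => z0; have := prim_expr_order z_prim.
by rewrite z0 expr0n gtn_eqF ?(prim_order_gt0 z_prim) // => /esym/eqP; rewrite oner_eq0.
Qed.

Lemma expr_prim_inj h h' : (h < m)%N -> (h' < m)%N -> z ^+ h = z ^+ h' -> h = h'.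
Proof.
move=> hm h'm /eqP; rewrite (eq_prim_root_expr z_prim) => /eqP.
by rewrite !modn_small.
Qed.

End PrimitiveRootPowers.

Definition frobenius (F : finFieldType) (L : fieldExtType F) (x : L) : L := x ^+ #|F|.

Lemma frobenius_is_zmod_morphism (F : finFieldType) (L : fieldExtType F) :
  zmod_morphism (@frobenius F L).
Proof.
rewrite /frobenius => x y; have [p _ pcharFp] := finPcharP F.
rewrite (card_pprimeChar pcharFp); elim: (logn _ _) => // k IHk.
rewrite expnSr !exprM {}IHk; rewrite -(pchar_lalg L) in pcharFp.
by rewrite -pFrobenius_autE rmorphB.
Qed.

Lemma frobenius_is_monoid_morphism (F : finFieldType) (L : fieldExtType F) :
  monoid_morphism (@frobenius F L).
Proof. by rewrite /frobenius; split=> [|x y]; rewrite ?exprMn ?expr1n. Qed.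

HB.instance Definition _ (F : finFieldType) (L : fieldExtType F) :=
  GRing.isZmodMorphism.Build L L (@frobenius F L) (@frobenius_is_zmod_morphism F L).
HB.instance Definition _ (F : finFieldType) (L : fieldExtType F) :=
  GRing.isMonoidMorphism.Build L L (@frobenius F L) (@frobenius_is_monoid_morphism F L).

Section Descent.

Variables (F : finFieldType) (L : fieldExtType F).

Lemma frobenius_fixed (x : L) : frobenius x = x -> exists a : F, x = a%:A.
Proof.
move=> xq; have : x \in (1%VS : {vspace L}).
  by rewrite (Fermat's_little_theorem 1%AS) dimv1 expn1 -[_ ^+ _]/(frobenius x) xq.
by case/vlineP => a ->; exists a.
Qed.

Lemma frobenius_stable_coef (P : {poly L}) :
  map_poly (@frobenius F L) P = P -> forall i, exists a : F, P`_i = a%:A.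
Proof.
move=> PP i; apply: frobenius_fixed.
by have := congr1 (fun p : {poly L} => p`_i) PP; rewrite /= coef_map.
Qed.

Lemma descendK (P : {poly L}) :
  (forall i, exists a : F, P`_i = a%:A) -> map_poly (in_alg L) (descend P) = P.
Proof.
move=> PF; apply/polyP => i; rewrite coef_map /= /descend coef_poly.
case: ifP => [_|/negbT]; last by rewrite -leqNgt => /(nth_default 0) ->; rewrite scale0r.
case: pickP => [a /eqP -> //|none].
by have [a ea] := PF i; have := none a; rewrite ea eqxx.
Qed.

Variables (m : nat) (z : L).
Hypotheses (m_gt0 : (0 < m)%N) (z_prim : m.-primitive_root z) (coprime_qm : coprime #|F| m).

(* The Frobenius permutes the roots z^h, h in a q-cyclotomic coset, so the
   polynomial with these roots is Frobenius-stable. *)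
Lemma coset_poly_frobenius r :
  map_poly (@frobenius F L) (coset_poly z (cycl_coset #|F| m r)) =
  coset_poly z (cycl_coset #|F| m r).
Proof.
set C := cycl_coset #|F| m r; rewrite /coset_poly rmorph_prod /=.
have frobX h : map_poly (@frobenius F L) ('X - (z ^+ h)%:P) = 'X - (z ^+ (h * #|F| %% m))%:P.
  by rewrite rmorphB /= map_polyX map_polyC /= /frobenius -exprM (expr_prim_mod z_prim).
rewrite (eq_bigr _ (fun h _ => frobX h)).
rewrite -(big_map (fun h => (h * #|F| %% m)%N) xpredT (fun h => 'X - (z ^+ h)%:P)).
have uniq_qC : uniq [seq (h * #|F| %% m)%N | h <- C].
  rewrite map_inj_in_uniq ?undup_uniq // => h h' hC h'C /= e.
  apply: (expr_prim_inj z_prim); [exact: cycl_coset_lt hC|exact: cycl_coset_lt h'C|].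
  apply: (fmorph_inj (@frobenius F L)).
  by rewrite /= /frobenius -!exprM -(expr_prim_mod z_prim) e (expr_prim_mod z_prim).
have sub_qC : {subset [seq (h * #|F| %% m)%N | h <- C] <= C}.
  by move=> x /mapP[h hC ->]; apply: cycl_coset_mulq.
apply: perm_big; apply: uniq_perm => //; first exact: undup_uniq.
by case: (uniq_min_size uniq_qC sub_qC _) => //; rewrite size_map.
Qed.

End Descent.

Definition eval_word (F : finFieldType) (L : fieldExtType F) (n : nat)
  (c : 'rV[F]_n) (x : L) : L :=
  (map_poly (in_alg L) (poly_of c)).[x].

Section Evaluation.

Variables (F : finFieldType) (L : fieldExtType F) (n : nat) (lam : F).
Hypothesis n_gt0 : (0 < n)%N.

Local Notation lift p := (map_poly (in_alg L) p).
Local Notation P := (polyR n lam).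

Lemma eval_wordB (c d : 'rV[F]_n) (x : L) :
  eval_word (c - d) x = eval_word c x - eval_word d x.
Proof. by rewrite /eval_word !raddfB hornerD hornerN. Qed.

Lemma eval_word_sum l (f : 'I_l -> 'rV[F]_n) (x : L) :
  eval_word (\sum_(i < l) f i) x = \sum_(i < l) eval_word (f i) x.
Proof. by rewrite /eval_word (raddf_sum (@poly_of F n)) rmorph_sum horner_sum. Qed.

Lemma eval_word_eq0 (c : 'rV[F]_n) (xs : seq L) :
  uniq xs -> size xs = n -> (forall x, x \in xs -> eval_word c x = 0) -> c = 0.
Proof.
move=> xs_uniq xs_size c_xs; apply: (@poly_of_inj F n); rewrite raddf0.
apply/eqP; rewrite -(map_poly_eq0 (in_alg L)); apply/negPn/negP => c_neq0.
have c_roots : all (root (lift (poly_of c))) xs by apply/allP => x /c_xs /eqP.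
have := max_poly_roots c_neq0 c_roots xs_uniq.
by rewrite xs_size size_map_poly ltnNge size_poly_of.
Qed.

Lemma eval_vec_of (p : {poly F}) (x : L) :
  (lift P).[x] = 0 -> eval_word (vec_of n lam p) x = (lift p).[x].
Proof.
move=> Px; rewrite /eval_word poly_of_vec // {2}(divp_eq p P).
by rewrite rmorphD rmorphM /= hornerD hornerM Px mulr0 add0r.
Qed.

Lemma eval_iter_rho (c : 'rV[F]_n) k (x : L) :
  (lift P).[x] = 0 -> eval_word (iter k (rho lam) c) x = x ^+ k * eval_word c x.
Proof.
by move=> Px; rewrite iter_rho // eval_vec_of // rmorphM /= map_polyXn hornerM hornerXn.
Qed.

End Evaluation.

Section ConstacyclicCodes.

Variables (F : finFieldType) (L : fieldExtType F) (n t : nat) (lam : F) (z : L).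
Hypotheses (n_gt0 : (0 < n)%N) (coprime_nq : coprime n #|F|)
  (lam_prim : t.-primitive_root lam) (z_prim : (t * n).-primitive_root z)
  (z_n : z ^+ n = lam%:A).

Local Notation lift p := (map_poly (in_alg L) p).
Local Notation P := (polyR n lam).
Local Notation coset r := (cycl_coset #|F| (t * n) r).

Lemma t_gt0 : (0 < t)%N.
Proof. exact: prim_order_gt0 lam_prim. Qed.

Lemma tn_gt0 : (0 < t * n)%N.
Proof. by rewrite muln_gt0 t_gt0. Qed.

(* The order t of lam divides q - 1. *)
Lemma q_mod_t : (#|F| %% t = 1 %% t)%N.
Proof.
have q_gt0 : (0 < #|F|)%N by rewrite ltnW ?finNzRing_gt1.
have lam_neq0 := prim_root_neq0 lam_prim.
have : lam ^+ #|F|.-1 = 1 by apply: (mulfI lam_neq0); rewrite -exprS prednK // expf_card mulr1.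
move/eqP; rewrite -(prim_order_dvd lam_prim) => /dvdnP[k qk].
by rewrite -(prednK q_gt0) qk -addn1 modnMDl.
Qed.

Lemma coprime_q_tn : coprime #|F| (t * n).
Proof.
rewrite coprime_sym coprimeMl coprime_nq andbT.
by rewrite -coprime_modr q_mod_t coprime_modr coprimen1.
Qed.

(* z^h is a root of x^n - lam whenever h = 1 mod t, since z^n = lam has order t. *)
Lemma root_polyR h : (h %% t = 1 %% t)%N -> (lift P).[z ^+ h] = 0.
Proof.
move=> ht; have lam_t := prim_expr_order lam_prim.
rewrite /polyR rmorphB /= map_polyXn map_polyC /= !hornerE.
rewrite -exprM mulnC exprM z_n -!in_algE -rmorphXn.
by rewrite -(expr_mod _ lam_t) ht (expr_mod _ lam_t) expr1 subrr.
Qed.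

(* The n distinct roots of x^n - lam are the z^(1 + t i), i < n. *)
Lemma uniq_roots_polyR : uniq [seq z ^+ (1 + t * i) | i <- iota 0 n].
Proof.
rewrite map_inj_in_uniq ?iota_uniq // => i j.
rewrite !mem_iota !add0n => /andP[_ ni] /andP[_ nj] /eqP.
rewrite (eq_prim_root_expr z_prim) eqn_modDl -!muln_modr eqn_pmul2l ?t_gt0 //.
by rewrite !modn_small // => /eqP.
Qed.

Lemma eval_roots_eq0 (c : 'rV[F]_n) :
  (forall i, (i < n)%N -> eval_word c (z ^+ (1 + t * i)) = 0) -> c = 0.
Proof.
move=> c_roots; apply: (eval_word_eq0 uniq_roots_polyR); first by rewrite size_map size_iota.
by move=> x /mapP[i]; rewrite mem_iota add0n => /andP[_ ni] ->; apply: c_roots.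
Qed.

Lemma exists_eval_root_neq0 (c : 'rV[F]_n) :
  c != 0 -> exists2 i, (i < n)%N & eval_word c (z ^+ (1 + t * i)) != 0.
Proof.
move=> c_neq0; have [i ci|c0] := pickP (fun i : 'I_n => eval_word c (z ^+ (1 + t * i)) != 0).
  by exists i.
case/eqP: c_neq0; apply: eval_roots_eq0 => i ni.
by have /negbFE/eqP := c0 (Ordinal ni).
Qed.

Lemma eval_iter_rho_root (c : 'rV[F]_n) k i :
  eval_word (iter k (rho lam) c) (z ^+ (1 + t * i)) =
  z ^+ (1 + t * i) ^+ k * eval_word c (z ^+ (1 + t * i)).
Proof. by apply: eval_iter_rho => //; apply: root_polyR; rewrite modn_1_mul. Qed.

Lemma rho_inj : injective (@rho F n lam).
Proof.
move=> c d cd; apply/eqP; rewrite -subr_eq0; apply/eqP; apply: eval_roots_eq0 => i _.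
have := congr1 (fun v => eval_word v (z ^+ (1 + t * i))) cd.
rewrite -[rho lam c]/(iter 1 (rho lam) c) -[rho lam d]/(iter 1 (rho lam) d).
have x_neq0 : z ^+ (1 + t * i) ^+ 1 != 0.
  by do 2 apply: expf_neq0; exact: prim_root_neq0 z_prim.
by rewrite !eval_iter_rho_root => /(mulfI x_neq0) cd_i; rewrite eval_wordB cd_i subrr.
Qed.

Section IrreducibleCode.

Variables (alpha : nat -> nat) (j : nat).

Local Notation r := (1 + t * alpha j)%N.
Local Notation m_j := (m_poly n t z alpha j).
Local Notation I_j := (I_code n t lam z alpha j).

Lemma m_poly_lift : lift m_j = coset_poly z (coset r).
Proof.
apply: descendK; apply: frobenius_stable_coef.
exact: coset_poly_frobenius tn_gt0 z_prim coprime_q_tn r.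
Qed.

Lemma m_poly_dvd : m_j %| P.
Proof.
rewrite -(dvdp_map (in_alg L)) m_poly_lift.
have C_roots : all (root (lift P)) [seq z ^+ h | h <- coset r].
  apply/allP => x /mapP[h hC ->]; apply/eqP/root_polyR.
  exact: cycl_coset_mod (dvdn_mulr _ (dvdnn t)) q_mod_t (modn_1_mul _ _) hC.
have C_uniq : uniq_roots [seq z ^+ h | h <- coset r].
  rewrite uniq_rootsE map_inj_in_uniq ?undup_uniq // => h h'.
  move=> /(cycl_coset_lt tn_gt0) h_lt /(cycl_coset_lt tn_gt0) h'_lt.
  by apply: (expr_prim_inj z_prim).
have [Q ->] := uniq_roots_prod_XsubC C_roots C_uniq.
by rewrite /coset_poly big_map dvdp_mull.
Qed.

Lemma size_m_poly : size m_j = (d_dim #|F| n t alpha j).+1.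
Proof. by rewrite -(size_map_poly (in_alg L)) m_poly_lift /coset_poly size_prod_XsubC. Qed.

(* A codeword of I_j vanishes at every root z^(1 + t i) outside the coset of r:
   it is a multiple of P / m_j, and m_j does not vanish there. *)
Lemma I_code_vanish c i : c \in I_j -> ((1 + t * i) %% (t * n))%N \notin coset r ->
  eval_word c (z ^+ (1 + t * i)) = 0.
Proof.
case/imsetP => a _ -> iC; set x := z ^+ (1 + t * i).
have Px : (lift P).[x] = 0 by apply: root_polyR; rewrite modn_1_mul.
have m_x : (lift m_j).[x] != 0.
  rewrite /x -(expr_prim_mod z_prim) m_poly_lift /coset_poly horner_prod prodf_seq_neq0.
  apply/allP => h hC /=; rewrite hornerXsubC subr_eq0; apply: contra iC => /eqP e.
  by rewrite (expr_prim_inj z_prim _ _ e) // ?ltn_pmod ?tn_gt0 // (cycl_coset_lt tn_gt0 hC).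
have : (lift (P %/ m_j)).[x] * (lift m_j).[x] = 0.
  by rewrite -hornerM -rmorphM divpK ?m_poly_dvd.
move/eqP; rewrite mulf_eq0 (negbTE m_x) orbF => /eqP Gx.
by rewrite eval_vec_of // rmorphM hornerM Gx mul0r.
Qed.

Lemma I_code_rho c : c \in I_j -> rho lam c \in I_j.
Proof.
case/imsetP => a _ ->; apply/imsetP; exists (vec_of n lam ('X * poly_of a)) => //.
by rewrite /rho !poly_of_vec //; apply: vec_of_eq; rewrite !modp_mul mulrCA.
Qed.

Lemma I_code0 : 0 \in I_j.
Proof. by apply/imsetP; exists 0; rewrite ?raddf0 ?mulr0 ?raddf0. Qed.

(* I_j is the image of the d_j-dimensional space of remainders modulo m_j under
   multiplication by P / m_j, which is injective on them. *)
Lemma card_I_code : #|I_j| = (#|F| ^ d_dim #|F| n t alpha j)%N.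
Proof.
set d := d_dim #|F| n t alpha j; set m := m_j.
pose G : {poly F} := P %/ m.
have size_m : size m = d.+1 by exact: size_m_poly.
have P_neq0 : P != 0 by rewrite polyR_neq0.
have m_neq0 : m != 0 by rewrite -size_poly_eq0 size_m.
have GmP : G * m = P by rewrite divpK ?m_poly_dvd.
have G_neq0 : G != 0 by apply: contra P_neq0 => /eqP G0; rewrite -GmP G0 mul0r.
have d_le_n : (d <= n)%N by have := dvdp_leq P_neq0 m_poly_dvd; rewrite -/m size_m size_polyR.
have size_G : size G = (n - d).+1.
  (* [change] re-elaborates [size m] at the field structure used by [size_m] *)
  rewrite size_divp // size_polyR //; change (n.+1 - (size m).-1 = (n - d).+1)%N.
  by rewrite size_m subSn.
pose embed (b : 'rV[F]_d) := vec_of n lam (G * poly_of b).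
have embed_inj : injective embed.
  have small (b : 'rV[F]_d) : (size (G * poly_of b)%R < size P)%N.
    rewrite size_polyR //; apply: leq_ltn_trans (size_polyMleq _ _) _.
    by have := size_poly_of b; rewrite size_G; lia.
  move=> b b' /(congr1 (@poly_of F n)); rewrite /embed !poly_of_vec // !modp_small //.
  by move/(mulfI G_neq0)/poly_of_inj.
have -> : I_j = embed @: setT.
  apply/setP => c; apply/imsetP/imsetP => [[a _ ->]|[b _ ->]].
    set rem := poly_of a %% m.
    have size_rem : (size rem <= d)%N by rewrite -ltnS -size_m ltn_modp.
    exists (\row_(i < d) rem`_i) => //; rewrite /embed poly_of_row //.
    apply: vec_of_eq; rewrite {1}(divp_eq (poly_of a) m) mulrDr mulrCA GmP modpD.
    by rewrite modp_mull add0r.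
  exists (vec_of n lam (poly_of b)) => //; rewrite /embed poly_of_vec //.
  by apply: vec_of_eq; rewrite modp_mul.
by rewrite card_imset // cardsT card_mx mul1n.
Qed.

End IrreducibleCode.

(* Distinct coset representatives (listed by an increasing beta) give pairwise
   disjoint cosets, because two cosets sharing an element coincide. *)
Lemma cosets_disjoint_of s (alpha : nat -> nat) l (beta : nat -> nat) :
  (forall j k, (j <= s)%N -> (k <= s)%N -> j != k ->
     ~ (coset (1 + t * alpha j) =i coset (1 + t * alpha k))) ->
  (forall i, (i.+1 < l)%N -> (beta i < beta i.+1)%N) ->
  (forall i, (i < l)%N -> (beta i <= s)%N) ->
  forall (i i' : 'I_l) h, h \in coset (1 + t * alpha (beta i)) ->
    h \in coset (1 + t * alpha (beta i')) -> i = i'.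
Proof.
move=> distinct beta_incr beta_le i i' h hi hi'; apply/eqP/negPn/negP => ii'.
have beta_neq : beta i != beta i'.
  have mono := increasing_ltn beta_incr.
  case: (ltngtP i i') ii' => [lt|lt|/val_inj ->]; last by rewrite eqxx.
    by rewrite ltn_eqF ?mono.
  by rewrite gtn_eqF ?mono.
apply: (distinct _ _ (beta_le _ (ltn_ord i)) (beta_le _ (ltn_ord i')) beta_neq).
exact: (cycl_coset_eq tn_gt0 coprime_q_tn hi hi').
Qed.

Section SumCode.

Variables (alpha : nat -> nat) (l : nat) (beta : nat -> nat).

Local Notation r i := (1 + t * alpha (beta i))%N.
Local Notation I_ i := (I_code n t lam z alpha (beta i)).
Local Notation C := (C_beta n t lam z alpha l beta).

Hypothesis cosets_disjoint : forall (i i' : 'I_l) h,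
  h \in coset (r i) -> h \in coset (r i') -> i = i'.

Lemma C_betaP c :
  reflect (exists2 f : {ffun 'I_l -> 'rV[F]_n},
             (forall i, f i \in I_ i :\ 0) & c = \sum_(i < l) f i)
          (c \in C).
Proof.
apply: (iffP imsetP) => [[f f_I ->]|[f f_I ->]]; exists f => //.
  by move=> i; move: f_I; rewrite inE => /forallP.
by rewrite inE; apply/forallP.
Qed.

(* At a root z^(1 + t i0) in the coset of r i, a sum of codewords of the I_ i'
   takes the value of its i-th summand: all other summands vanish there. *)
Lemma eval_sum_coset (f : 'I_l -> 'rV[F]_n) (i : 'I_l) i0 :
  (forall i, f i \in I_ i) -> ((1 + t * i0) %% (t * n))%N \in coset (r i) ->
  eval_word (\sum_(i' < l) f i') (z ^+ (1 + t * i0)) = eval_word (f i) (z ^+ (1 + t * i0)).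
Proof.
move=> f_I i0C; rewrite eval_word_sum (bigD1 i) //= big1 ?addr0 // => i' i'i.
apply: I_code_vanish (f_I i') _; apply: contra i'i => i0C'.
by rewrite (cosets_disjoint i0C i0C').
Qed.

(* C is rho-stable, since each I_ i is and rho is injective. *)
Lemma C_beta_rho c : c \in C -> rho lam c \in C.
Proof.
case/C_betaP => f f_I ->; apply/C_betaP; exists [ffun i => rho lam (f i)].
  move=> i; rewrite ffunE; have := f_I i; rewrite !inE => /andP[fi_neq0 fi_I].
  rewrite I_code_rho // andbT; apply: contra fi_neq0 => /eqP fi0.
  by apply/eqP/rho_inj; rewrite fi0 raddf0.
by rewrite raddf_sum; apply: eq_bigr => i _; rewrite ffunE.
Qed.

(* rho^k fixes c_1 + ... + c_l (all c_i nonzero) iff z^(r_i k) = 1 for every i,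
   i.e. iff t n divides every r_i k. *)
Lemma iter_rho_fixed (f : 'I_l -> 'rV[F]_n) k : (forall i, f i \in I_ i :\ 0) ->
  (iter k (rho lam) (\sum_(i < l) f i) == \sum_(i < l) f i) =
  [forall i : 'I_l, (t * n) %| r i * k]%N.
Proof.
move=> f_I; have f_Ii i : f i \in I_ i by have := f_I i; rewrite !inE => /andP[].
apply/eqP/forallP => [fixed i|dvd_all].
  have /exists_eval_root_neq0[i0 _ fi_neq0] : f i != 0.
    by have := f_I i; rewrite !inE => /andP[].
  have i0C : ((1 + t * i0) %% (t * n))%N \in coset (r i).
    by apply: contraR fi_neq0 => i0C; rewrite (I_code_vanish (f_Ii i) i0C).
  have := congr1 (fun v => eval_word v (z ^+ (1 + t * i0))) fixed.
  rewrite /= eval_iter_rho_root !(eval_sum_coset f_Ii i0C) -{2}[eval_word (f i) _]mul1r.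
  move/(mulIf fi_neq0); rewrite -(expr_prim_mod z_prim) -exprM => /eqP.
  by rewrite -(prim_order_dvd z_prim) (cycl_coset_dvd coprime_q_tn _ i0C).
apply/eqP; rewrite -subr_eq0; apply/eqP; apply: eval_roots_eq0 => i0 _.
rewrite eval_wordB eval_iter_rho_root -{2}[eval_word _ _]mul1r -mulrBl eval_word_sum.
rewrite mulr_sumr big1 // => i _.
have [i0C|i0C] := boolP (((1 + t * i0) %% (t * n))%N \in coset (r i)); last first.
  by rewrite (I_code_vanish (f_Ii i) i0C) mulr0.
have := dvd_all i; rewrite -(cycl_coset_dvd coprime_q_tn _ i0C) (prim_order_dvd z_prim).
by rewrite exprM (expr_prim_mod z_prim) => /eqP ->; rewrite subrr mul0r.
Qed.

Lemma order_C_beta c : c \in C ->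
  order (rho lam) c = ((t * n) %/ gcdn (t * n) (\big[gcdn/0]_(i < l) r i))%N.
Proof.
case/C_betaP => f f_I ->; apply: order_eq; first exact: rho_inj.
  by rewrite divn_gt0 ?gcdn_gt0 ?tn_gt0 // dvdn_leq ?tn_gt0 ?dvdn_gcdl.
by move=> k; rewrite iter_rho_fixed // forall_dvdn_biggcd dvdn_mul_gcd ?tn_gt0.
Qed.

(* The decomposition c = c_1 + ... + c_l is unique, so
   #|C| = prod_i (#|I_i| - 1) = prod_i (q^(d_i) - 1). *)
Lemma card_C_beta : #|C| = (\prod_(i < l) (#|F| ^ d_dim #|F| n t alpha (beta i) - 1))%N.
Proof.
rewrite /C_beta card_in_imset.
  rewrite (eq_card (B := family (fun i : 'I_l => mem (I_ i :\ 0)))); last first.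
    by move=> f; rewrite !inE; apply/forallP/familyP.
  rewrite card_family foldrE big_map big_enum /=; apply: eq_bigr => i _.
  have := cardsD1 0 (I_ i); rewrite I_code0 card_I_code add1n => card_I.
  by rewrite card_I subn1.
move=> f g; rewrite !inE => /forallP f_I /forallP g_I fg.
have f_Ii i : f i \in I_ i by have := f_I i; rewrite !inE => /andP[].
have g_Ii i : g i \in I_ i by have := g_I i; rewrite !inE => /andP[].
apply/ffunP => i; apply/eqP; rewrite -subr_eq0; apply/eqP.
apply: eval_roots_eq0 => i0 _; rewrite eval_wordB.
have [i0C|i0C] := boolP (((1 + t * i0) %% (t * n))%N \in coset (r i)); last first.
  by rewrite (I_code_vanish (f_Ii i) i0C) (I_code_vanish (g_Ii i) i0C) subrr.
by rewrite -(eval_sum_coset f_Ii i0C) -(eval_sum_coset g_Ii i0C) fg subrr.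
Qed.

End SumCode.

End ConstacyclicCodes.

Theorem lemma3 (F : finFieldType) (L : fieldExtType F) (n t : nat) (lam : F)
  (z : L) (s : nat) (alpha : nat -> nat) (l : nat) (beta : nat -> nat) :
  (0 < n)%N ->
  coprime n #|F| ->
  t.-primitive_root lam ->
  (t * n)%N.-primitive_root z ->
  z ^+ n = lam%:A ->
  (* the coset representatives 1 + t alpha_j, j = 0..s *)
  alpha 0%N = 0%N ->
  (forall j, (j < s)%N -> (alpha j < alpha j.+1)%N) ->
  (alpha s <= n.-1)%N ->
  (forall j k, (j <= s)%N -> (k <= s)%N -> j != k ->
     ~ (cycl_coset #|F| (t * n) (1 + t * alpha j)
        =i cycl_coset #|F| (t * n) (1 + t * alpha k))) ->
  (forall i, (i < n)%N -> exists2 j, (j <= s)%N &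
     ((1 + t * i) %% (t * n))%N \in cycl_coset #|F| (t * n) (1 + t * alpha j)) ->
  (* the indices beta_1 < ... < beta_l in {0..s} *)
  (1 <= l <= s.+1)%N ->
  (forall i, (i.+1 < l)%N -> (beta i < beta i.+1)%N) ->
  (forall i, (i < l)%N -> (beta i <= s)%N) ->
  (norbits (rho lam) (C_beta n t lam z alpha l beta) * (t * n) =
   (\prod_(i < l) (#|F| ^ d_dim #|F| n t alpha (beta i) - 1)) *
   gcdn (\big[gcdn/0]_(i < l) (1 + t * alpha (beta i))) n)%N.
Proof.
move=> n_gt0 coprime_nq lam_prim z_prim z_n _ _ _ distinct _ /andP[l_gt0 _] beta_incr beta_le.
have disjoint := cosets_disjoint_of n_gt0 coprime_nq lam_prim distinct beta_incr beta_le.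
set G := \big[gcdn/0]_(i < l) (1 + t * alpha (beta i)).
have orbits : (norbits (rho lam) (C_beta n t lam z alpha l beta) * ((t * n) %/ gcdn (t * n) G)
               = #|C_beta n t lam z alpha l beta|)%N.
  apply: norbits_mul => [|c|c]; first exact: (rho_inj n_gt0 lam_prim z_prim z_n).
    exact: C_beta_rho.
  exact: order_C_beta.
rewrite card_C_beta // in orbits.
(* G = 1 mod t, so gcd(t n, G) = gcd(G, n) *)
have coprime_Gt : coprime G t.
  apply: coprime_dvdl (biggcdn_inf (Ordinal l_gt0) _ (dvdnn _)) _ => //.
  by rewrite coprime_sym -coprime_modr modn_1_mul coprime_modr coprimen1.
have gcd_tn : gcdn (t * n) G = gcdn G n by rewrite gcdnC mulnC Gauss_gcdl.
by rewrite -orbits -mulnA -gcd_tn divnK ?dvdn_gcdl.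
Qed.
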